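(* Consider the problem with $p=0$. Let Assumption 1 hold, let $\{\mathbf x_k\}$ be generated by Algorithm MADS-PIP, and let $\mathcal K^x_\rho\subseteq\mathcal K_\rho$ be the index set of an end-path subsequence with end-path point $\bar{\mathbf x}$. Assume that $f$ is Lipschitz continuous near $\bar{\mathbf x}$, that the sequence of poll direction sets $\{\mathcal D_k\}_{k\in\mathcal K^x_\rho}$ is dense in the unit sphere, and that $\bar{\mathbf x}\in\Omega$ satisfies the SCQ. Then $f^\circ(\bar{\mathbf x};\mathbf d)\ge0$ for all $\mathbf d\in\mathcal T^H_\Omega(\bar{\mathbf x})$.
   Context: Consider the problem of minimizing $f(\mathbf x)$ over $\mathbf x\in\mathbb R^n$ subject to $g_\ell(\mathbf x)\le 0$ ($\ell=1,\dots,m$), with $f,g_\ell:\mathbb R^n\to\mathbb R\cup\{+\infty\}$ (no equality constraints, $p=0$). The index set $\{1,\dots,m\}$ is partitioned into disjoint sets $\mathcal G^{int}$ and $\mathcal G^{ext}$, fixed throughout. Define $\Omega^{int}=\{\mathbf x: g_\ell(\mathbf x)\le 0\ \forall\ell\in\mathcal G^{int}\}$, $\Omega^{ext}=\{\mathbf x: g_\ell(\mathbf x)\le0\ \forall \ell\in\mathcal G^{ext}\}$, $\Omega=\Omega^{int}\cap\Omega^{ext}$. Let $\phi^{prox}(\mathbf x)=\max_{\ell\in\mathcal G^{int}}g_\ell(\mathbf x)$; $c^{int}(\mathbf x)=-\prod_{\ell\in\mathcal G^{int}}\min\{1,-g_\ell(\mathbf x)\}$ if $g_\ell(\mathbf x)\le0$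 for all $\ell\in\mathcal G^{int}$, and $c^{int}(\mathbf x)=\phi^{prox}(\mathbf x)$ otherwise; $c^{ext}(\mathbf x)=\sum_{\ell\in\mathcal G^{ext}}(\max\{0,g_\ell(\mathbf x)\})^2$. (If $\mathcal G^{int}=\emptyset$, then $c^{int}\equiv-1$ and $[\phi^{prox}]^2$ is read as $+\infty$.) For $\rho>0$ the merit function is $z(\mathbf x;\rho)=f(\mathbf x)-\rho\log(-c^{int}(\mathbf x))+\frac1\rho c^{ext}(\mathbf x)$ if $c^{int}(\mathbf x)<0$, and $+\infty$ otherwise. Algorithm MADS-PIP: inputs $\mathbf x_0$ with $g_\ell(\mathbf x_0)<0$ for all $\ell\in\mathcal G^{int}$ and $z(\mathbf x_0;\rho_0)<+\infty$, $\rho_0>0$, $\theta_\rho\in(0,1)$, $\Delta_0>0$, $\theta_\Delta\in(0,1)\cap\mathbb Q$, $\beta>1$. For $k=0,1,2,\dots$ (the algorithm never stops): mesh $\mathcal M_k=\{\mathbf x_k+\delta_k\mathbf u:\mathbf u\in\mathbb Z^n\}$ with $\delta_k=\min\{\Delta_k,\Delta_k^2/\Delta_0\}$; frame $\mathcal F_k=\{\mathbf x\in\mathcal M_k:\|\mathbf x-\mathbf x_k\|\le\Delta_k\}$. Search: a finite (possibly empty) set $\mathcal S_k\subset\mathcal M_k$ is examined; if some $\mathbf s\in\mathcal S_k$ satisfies $z(\mathbf s;\rho_k)<z(\mathbf x_k;\rho_k)$, set $\mathbf x_{k+1}=\mathbf s$, $\Delta_{k+1}=\Delta_k/\theta_\Delta$,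 $\rho_{k+1}=\rho_k$ (successful iteration). Otherwise poll: choose a finite set $\mathcal D_k$ of nonzero directions with $\mathbf x_k+\mathbf d\in\mathcal F_k$ for all $\mathbf d\in\mathcal D_k$; if some $\mathbf d\in\mathcal D_k$ satisfies $z(\mathbf x_k+\mathbf d;\rho_k)<z(\mathbf x_k;\rho_k)$, set $\mathbf x_{k+1}=\mathbf x_k+\mathbf d$, $\Delta_{k+1}=\Delta_k/\theta_\Delta$, $\rho_{k+1}=\rho_k$ (successful). Otherwise the iteration is unsuccessful: $\mathbf x_{k+1}=\mathbf x_k$, $\Delta_{k+1}=\theta_\Delta\Delta_k$, and $\rho_{k+1}=\theta_\rho\rho_k$ if $\Delta_{k+1}\le\min\{\rho_k^\beta,[\phi^{prox}(\mathbf x_k)]^2\}$, else $\rho_{k+1}=\rho_k$. The path-following index set is $\mathcal K_\rho=\{k:\rho_{k+1}<\rho_k\}$. A point $\bar{\mathbf x}$ is an end-path point if there is an infinite $\mathcal K_\rho^{x}\subseteq\mathcal K_\rho$ with $\lim_{k\in\mathcal K_\rho^x}\mathbf x_k=\bar{\mathbf x}$; $\{\mathbf x_k\}_{k\in\mathcal K^x_\rho}$ is then an end-path subsequence. Assumption 1: for every $\alpha\in\mathbb R$ the level set $\{\mathbf x\in\mathbb R^n: f(\mathbf x)\le\alpha\}$ is bounded. Clarke generalized directional derivative: $c^\circ(\mathbf x;\mathbf d)=\limsup_{\mathbf y\to\mathbf x,\ t\searrow0}\frac{c(\mathbf y+t\mathbf d)-c(\mathbf y)}{t}$. $\mathcal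 B(\mathbf x,\epsilon)$ is the ball of radius $\epsilon$ centred at $\mathbf x$. Density: for an infinite index set $\mathcal K$, the sequence $\{\mathcal D_k\}_{k\in\mathcal K}$ is dense in the unit sphere if for every unit vector $\bar{\mathbf d}$ there exist an infinite $\mathcal K^d\subseteq\mathcal K$ and $\mathbf d_k\in\mathcal D_k$ ($k\in\mathcal K^d$) with $\lim_{k\in\mathcal K^d}\mathbf d_k/\|\mathbf d_k\|=\bar{\mathbf d}$. Hypertangent cone: $\mathbf d$ is hypertangent to $\Omega$ at $\mathbf x$ if there is $\epsilon>0$ with $\mathbf y+t\mathbf w\in\Omega$ for all $\mathbf y\in\Omega\cap\mathcal B(\mathbf x,\epsilon)$, $\mathbf w\in\mathcal B(\mathbf d,\epsilon)$, $t\in(0,\epsilon)$; $\mathcal T^H_\Omega(\mathbf x)$ is the set of such vectors. Stationarity constraint qualification (SCQ): a point $\mathbf x\in\Omega$ satisfies SCQ if (a) $c^{int}$ and $c^{ext}$ are Lipschitz continuous near $\mathbf x$; (b) $(c^{int})^\circ(\mathbf x;\mathbf d)<0$ for every $\mathbf d\in\mathcal T^H_\Omega(\mathbf x)$; (c) for every $\mathbf d\in\mathcal T^H_\Omega(\mathbf x)$ there is $\epsilon>0$ such that $(c^{ext})^\circ(\mathbf y;\mathbf d)<0$ for all $\mathbf y\in\mathcal B(\mathbf x,\epsilon)\setminus\Omega^{ext}$. *)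

From HB Require Import structures.
From mathcomp Require Import all_boot all_order all_algebra.
From mathcomp Require Import all_classical all_reals all_analysis.
Set Implicit Arguments. Unset Strict Implicit. Unset Printing Implicit Defensive.
Import Order.TTheory GRing.Theory Num.Theory.
Local Open Scope classical_set_scope.
Local Open Scope ring_scope.

Section MadsPip.
Variables (R : realType) (n m : nat).
Notation vec := 'rV[R]_n.

Definition enorm (x : vec) : R := Num.sqrt (\sum_(i < n) x ord0 i ^+ 2).

Definition inBall (x : vec) (e : R) (y : vec) : Prop := enorm (y - x) < e.

Definition lipschitz_near (c : vec -> \bar R) (x : vec) : Prop :=
  exists e : R, 0 < e /\ exists L : R,
    (forall y, inBall x e y -> c y \is a fin_num) /\
    (forall y w, inBall x e y -> inBall x e w ->
       `|fine (c y) - fine (c w)| <= L * enorm (y - w)).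

(* Clarke generalized directional derivative of a real-valued function:
   limsup_{y -> x, t \searrow 0} (h (y + t d) - h y) / t
   = inf_{e > 0} sup { (h(y+td)-h(y))/t : |y - x| < e, 0 < t < e }. *)
Definition clarke (h : vec -> R) (x d : vec) : \bar R :=
  ereal_inf [set ereal_sup [set r : \bar R | exists (y : vec) (t : R),
                   [/\ inBall x e y, 0 < t, t < e &
                       r = ((h (y + t *: d) - h y) / t)%:E]]
            | e in [set e : R | 0 < e]].

(* Clarke derivative of an extended-valued function (used only where it is
   finite, i.e. near points where it is Lipschitz). *)
Definition clarkeE (c : vec -> \bar R) (x d : vec) : \bar R :=
  clarke (fun y => fine (c y)) x d.

Variables (g : 'I_m -> vec -> \bar R) (Gint : {set 'I_m}).
Definition Gext : {set 'I_m} := ~: Gint.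

Definition in_Omega_int (x : vec) : Prop := forall l, l \in Gint -> (g l x <= 0)%E.
Definition in_Omega_ext (x : vec) : Prop := forall l, l \in Gext -> (g l x <= 0)%E.
Definition in_Omega (x : vec) : Prop := in_Omega_int x /\ in_Omega_ext x.

Definition phi_prox (x : vec) : \bar R := \big[maxe/-oo%E]_(l in Gint) g l x.
(* [phi^prox]^2 ; equals +oo when G^int is empty, as required *)
Definition phi_prox_sq (x : vec) : \bar R := (phi_prox x * phi_prox x)%E.

Definition c_int (x : vec) : \bar R :=
  if [forall l, (l \in Gint) ==> (g l x <= 0)%E]
  then (- \prod_(l in Gint) Num.min 1 (- fine (g l x)))%:E
  else phi_prox x.

Definition c_ext (x : vec) : \bar R :=
  (\sum_(l in Gext) (maxe 0 (g l x) * maxe 0 (g l x)))%E.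

Variable f : vec -> \bar R.

Definition merit (x : vec) (rho : R) : \bar R :=
  if (c_int x < 0)%E
  then (f x - (rho * ln (- fine (c_int x)))%:E + (rho^-1)%:E * c_ext x)%E
  else +oo%E.

Definition hypertangent (x d : vec) : Prop :=
  exists e : R, 0 < e /\
    forall (y w : vec) (t : R), in_Omega y -> inBall x e y -> inBall d e w ->
      0 < t -> t < e -> in_Omega (y + t *: w).

Definition SCQ (x : vec) : Prop :=
  [/\ lipschitz_near c_int x /\ lipschitz_near c_ext x,
      (forall d, hypertangent x d -> (clarkeE c_int x d < 0)%E) &
      (forall d, hypertangent x d -> exists e : R, 0 < e /\
         forall y, inBall x e y -> ~ in_Omega_ext y ->
           (clarkeE c_ext y d < 0)%E)].

Definition on_mesh (xk : vec) (delta : R) (s : vec) : Prop :=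
  exists u : 'rV[int]_n, s = xk + delta *: map_mx (fun z : int => z%:~R) u.

Definition MADS_PIP_run (rho0 theta_rho Delta0 theta_Delta beta : R)
  (x : nat -> vec) (Delta rho : nat -> R) (S D : nat -> seq vec) : Prop :=
  [/\
      (forall l, l \in Gint -> (g l (x 0%N) < 0)%E) /\
      (merit (x 0%N) rho0 < +oo)%E,
      0 < rho0 /\ 0 < theta_rho /\ theta_rho < 1,
      0 < Delta0 /\ 0 < theta_Delta /\ theta_Delta < 1 /\
        (exists q : rat, theta_Delta = ratr q),
      1 < beta /\ Delta 0%N = Delta0 /\ rho 0%N = rho0 &
      forall k : nat,
        let delta := Num.min (Delta k) (Delta k ^+ 2 / Delta0) in
        (forall s, s \in S k -> on_mesh (x k) delta s) /\
        if `[< exists2 s, s \in S k & (merit s (rho k) < merit (x k) (rho k))%E >]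
        then
          [/\ (exists2 s, s \in S k &
                 (merit s (rho k) < merit (x k) (rho k))%E /\ x k.+1 = s),
              Delta k.+1 = Delta k / theta_Delta & rho k.+1 = rho k]
        else
          (forall d, d \in D k ->
             [/\ d != 0, on_mesh (x k) delta (x k + d) & enorm d <= Delta k]) /\
          if `[< exists2 d, d \in D k &
                  (merit (x k + d) (rho k) < merit (x k) (rho k))%E >]
          then
            [/\ (exists2 d, d \in D k &
                   (merit (x k + d) (rho k) < merit (x k) (rho k))%E /\
                   x k.+1 = x k + d),
                Delta k.+1 = Delta k / theta_Delta & rho k.+1 = rho k]
          else
            [/\ x k.+1 = x k, Delta k.+1 = theta_Delta * Delta k &
                rho k.+1 =
                  if ((Delta k.+1)%:E <= mine ((rho k `^ beta)%:E)
                                               (phi_prox_sq (x k)))%E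
                  then theta_rho * rho k else rho k]].

End MadsPip.

Definition infinite_idx (K : set nat) : Prop :=
  forall N : nat, exists k : nat, (N <= k)%N /\ K k.

Definition lim_along (R : realType) (n : nat) (K : set nat)
  (u : nat -> 'rV[R]_n) (l : 'rV[R]_n) : Prop :=
  forall e : R, 0 < e -> exists N : nat,
    forall k : nat, (N <= k)%N -> K k -> enorm (u k - l) < e.

Definition dense_in_sphere (R : realType) (n : nat) (K : set nat)
  (D : nat -> seq 'rV[R]_n) : Prop :=
  forall dbar : 'rV[R]_n, enorm dbar = 1 ->
    exists Kd : set nat, Kd `<=` K /\ infinite_idx Kd /\
      exists dk : nat -> 'rV[R]_n, (forall k, Kd k -> dk k \in D k) /\
        lim_along Kd (fun k => (enorm (dk k))^-1 *: dk k) dbar.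

From HB Require Import structures.
From mathcomp Require Import all_boot all_order all_algebra.
From mathcomp Require Import all_classical all_reals all_analysis.
From mathcomp Require Import ring lra.
Import Order.TTheory GRing.Theory Num.Theory.
Local Open Scope classical_set_scope.
Local Open Scope ring_scope.
Set Implicit Arguments. Unset Strict Implicit. Unset Printing Implicit Defensive.

(* Along the end-path subsequence every iteration is unsuccessful, so no poll point [x_k + d_k]
   decreases the merit function, and [Delta_k -> 0] since [Delta_(k+1) <= rho_k ^ beta].  By
   density, [d_k = s_k W_k] with [|W_k| = |d|], [W_k -> d] and [s_k -> 0].  The SCQ makes [c_int]
   and [c_ext] nonincreasing along [x_k + [0, s_k] W_k]: for [c_int] because its Clarke derivative
   at [xbar] along [d] is negative, for [c_ext] because [W_k] is a nonnegative combination of the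
   hypertangent directions [d +- ep e_i], along each of which [c_ext] decreases wherever it is
   positive.  Hence [f (x_k) <= f (x_k + s_k W_k)], and the Lipschitz continuity of [f] gives
   difference quotients of [f] along [d] at points near [xbar] that are bounded below by any
   [- eps], i.e. [f^o(xbar; d) >= 0]. *)

Section EuclideanNorm.
Variables (R : realType) (n : nat).
Notation vec := 'rV[R]_n.

Definition ssq (v : vec) : R := \sum_(i < n) v ord0 i ^+ 2.

Lemma ssq_ge0 (v : vec) : 0 <= ssq v.
Proof. by apply: sumr_ge0 => i _; exact: sqr_ge0. Qed.

Lemma ssq_eq0 (v : vec) : ssq v = 0 -> v = 0.
Proof.
move/psumr_eq0P => /(_ (fun i _ => sqr_ge0 _)) v0.
by apply/rowP => i; rewrite mxE; apply/eqP; rewrite -sqrf_eq0 v0.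
Qed.

Lemma enorm_ge0 (v : vec) : 0 <= enorm v.
Proof. exact: sqrtr_ge0. Qed.

Lemma enorm_gt0 (v : vec) : v != 0 -> 0 < enorm v.
Proof.
move=> v0; rewrite lt_neqAle enorm_ge0 andbT eq_sym sqrtr_eq0 -ltNge.
rewrite lt_neqAle ssq_ge0 andbT eq_sym.
by apply: contra v0 => /eqP/ssq_eq0 ->.
Qed.

Lemma enorm0 : enorm (0 : vec) = 0.
Proof. by rewrite /enorm big1 ?sqrtr0 // => i _; rewrite mxE expr0n. Qed.

Lemma enormZ c (v : vec) : enorm (c *: v) = `|c| * enorm v.
Proof.
rewrite /enorm -sqrtr_sqr -sqrtrM ?sqr_ge0 // mulr_sumr.
by congr Num.sqrt; apply: eq_bigr => i _; rewrite mxE exprMn.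
Qed.

Lemma enormN (v : vec) : enorm (- v) = enorm v.
Proof. by rewrite -scaleN1r enormZ normrN normr1 mul1r. Qed.

Lemma enorm_distC (u v : vec) : enorm (u - v) = enorm (v - u).
Proof. by rewrite -enormN opprB. Qed.

Lemma enorm_coord_le (v : vec) i : `|v ord0 i| <= enorm v.
Proof.
rewrite -sqrtr_sqr ler_sqrt ?ssq_ge0 // (bigD1 i) //= lerDl.
by apply: sumr_ge0 => j _; exact: sqr_ge0.
Qed.

Lemma enorm_cauchy_schwarz (a b : vec) :
  \sum_(i < n) a ord0 i * b ord0 i <= enorm a * enorm b.
Proof.
set S := \sum_(i < n) _.
suff S2 : S ^+ 2 <= ssq a * ssq b.
  rewrite -sqrtrM ?ssq_ge0 // (le_trans (ler_norm S)) // -sqrtr_sqr.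
  by rewrite ler_sqrt // mulr_ge0 ?ssq_ge0.
have [/ssq_eq0 b0|b0] := eqVneq (ssq b) 0.
  rewrite /S b0 big1 ?expr0n ?mulr_ge0 ?ssq_ge0 // => i _.
  by rewrite mxE mulr0.
have ssq_b_gt0 : 0 < ssq b by rewrite lt_neqAle eq_sym b0 ssq_ge0.
have quad t : 0 <= ssq a + 2 * t * S + t ^+ 2 * ssq b.
  rewrite /ssq /S !mulr_sumr -!big_split /=; apply: sumr_ge0 => i _.
  have -> : a ord0 i ^+ 2 + 2 * t * (a ord0 i * b ord0 i) + t ^+ 2 * b ord0 i ^+ 2
     = (a ord0 i + t * b ord0 i) ^+ 2 by ring.
  exact: sqr_ge0.
have := quad (- S / ssq b).
have -> : ssq a + 2 * (- S / ssq b) * S + (- S / ssq b) ^+ 2 * ssq b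
   = ssq a - S ^+ 2 / ssq b by field; rewrite gt_eqF.
by rewrite subr_ge0 ler_pdivrMr.
Qed.

Lemma ler_enormD (u v : vec) : enorm (u + v) <= enorm u + enorm v.
Proof.
rewrite -(ger0_norm (addr_ge0 (enorm_ge0 u) (enorm_ge0 v))) -sqrtr_sqr.
rewrite ler_sqrt ?sqr_ge0 // sqrrD !sqr_sqrtr ?ssq_ge0 // -!/(ssq _).
have -> : ssq (u + v) = ssq u + 2 * \sum_(i < n) u ord0 i * v ord0 i + ssq v.
  rewrite /ssq mulr_sumr -!big_split /=.
  by apply: eq_bigr => i _; rewrite mxE; ring.
by have := enorm_cauchy_schwarz u v; lra.
Qed.

Lemma enorm_delta_mx (i : 'I_n) : enorm (delta_mx ord0 i : vec) = 1.
Proof.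
rewrite /enorm (bigD1 i) //= big1 ?addr0 => [|j ji].
  by rewrite mxE !eqxx expr1n sqrtr1.
by rewrite mxE eqxx (negbTE ji) expr0n.
Qed.

Lemma inBall_addr (x y u : vec) (r1 r2 : R) :
  inBall x r1 y -> enorm u < r2 -> inBall x (r1 + r2) (y + u).
Proof. by move=> yx u2; rewrite /inBall addrAC (le_lt_trans (ler_enormD _ _)) ?ltrD. Qed.

End EuclideanNorm.

Lemma exists_pos_below (R : realType) (a b : R) :
  0 < a -> 0 < b -> exists t, [/\ 0 < t, t < a & t <= b].
Proof.
move=> a0 b0; exists (Num.min (a / 2) b).
by rewrite lt_min b0 divr_gt0 // gt_min ge_min lexx orbT ltr_pdivrMr //; split=> //; lra.
Qed.

Section RightNonincreasing.
Variables (R : realType) (phi : R -> R) (s K : R).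
Hypotheses (s_gt0 : 0 < s) (K_gt0 : 0 < K).
Hypothesis phi_lipschitz : forall a b, 0 <= a <= s -> 0 <= b <= s ->
  `|phi a - phi b| <= K * `|a - b|.

Lemma lipschitz_lt_add a b c :
  0 <= a <= s -> 0 <= b <= s -> `|a - b| < c / K -> phi a < phi b + c.
Proof.
move=> a0s b0s; rewrite ltr_pdivlMr // => abK.
have := phi_lipschitz a0s b0s; rewrite ler_norml => /andP[_]; lra.
Qed.

Lemma last_level_point (lev : R) : phi 0 <= lev ->
  exists sg, [/\ 0 <= sg <= s, phi sg <= lev &
    forall t, 0 <= t <= s -> phi t <= lev -> t <= sg].
Proof.
move=> phi0; pose A := [set t | 0 <= t <= s /\ phi t <= lev].
have A0 : A 0 by split; rewrite ?lexx ?(ltW s_gt0).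
have supA : has_sup A by split; [exists 0 | exists s => t [/andP[]]].
have sup_ge0 : 0 <= sup A by exact: sup_upper_bound.
have sup0s : 0 <= sup A <= s.
  by rewrite sup_ge0; apply: ge_sup; [exists 0 | move=> t [/andP[]]].
exists (sup A); split=> // [|t t0s phit]; last exact: sup_upper_bound.
rewrite leNgt; apply/negP => lev_lt.
have e0 : 0 < (phi (sup A) - lev) / K by rewrite divr_gt0 // subr_gt0.
have [t [t0s phit] supt] := sup_adherent e0 supA.
have tsup : t <= sup A by exact: sup_upper_bound.
have := @lipschitz_lt_add (sup A) t (phi (sup A) - lev) sup0s t0s.
by rewrite ger0_norm ?subr_ge0 //; lra.
Qed.

Lemma le_right_nonincr_where_pos : 0 <= phi 0 ->
  (forall tau, 0 <= tau < s -> 0 < phi tau ->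
     exists2 eta, 0 < eta & forall t, 0 < t < eta -> phi (tau + t) <= phi tau) ->
  phi s <= phi 0.
Proof.
move=> phi0 nonincr; rewrite leNgt; apply/negP => phis.
pose lev := (phi 0 + phi s) / 2.
have [sg [/andP[sg0 sgs] phisg sg_last]] := @last_level_point lev (ltac:(rewrite /lev; lra)).
have sglts : sg < s by rewrite lt_neqAle sgs andbT; apply: contraTneq phisg => ->; rewrite -ltNge /lev; lra.
suff [t [t0 tsg phit]] : exists t, [/\ 0 < t, t <= s - sg & phi (sg + t) <= lev].
  by have := sg_last (sg + t) (ltac:(apply/andP; split; lra)) phit; lra.
have [phisg0|phisg0] := ltP 0 (phi sg).
  have [eta eta0 decr] := nonincr sg (ltac:(by rewrite sg0)) phisg0.
  have [t [t0 teta tsg]] := exists_pos_below eta0 (ltac:(lra) : 0 < s - sg).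
  by exists t; split=> //; have := decr t (ltac:(by rewrite t0)); lra.
have e0 : 0 < (lev - phi sg) / K by rewrite divr_gt0 // subr_gt0 /lev; lra.
have [t [t0 te tsg]] := exists_pos_below e0 (ltac:(lra) : 0 < s - sg).
exists t; split=> //.
have := @lipschitz_lt_add (sg + t) sg (lev - phi sg).
by rewrite addrAC subrr add0r gtr0_norm // sg0 sgs => /(_ (ltac:(apply/andP; split; lra)) isT te); lra.
Qed.

End RightNonincreasing.

Lemma exists_common_radius (R : realType) (I : finType) (P : I -> R -> Prop) :
  (forall i, exists2 e, 0 < e & P i e) ->
  (forall i e e', 0 < e' <= e -> P i e -> P i e') ->
  exists2 e, 0 < e & forall i, P i e.
Proof.
move=> radius shrink.
suff [e e0 Pe] : exists2 e, 0 < e & forall i, i \in enum I -> P i e.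
  by exists e => // i; apply: Pe; rewrite mem_enum.
elim: (enum I) => [|j s [e e0 Pe]]; first by exists 1.
have [e' e'0 Pe'] := radius j.
have ee'0 : 0 < Num.min e e' by rewrite lt_min e0 e'0.
exists (Num.min e e') => // i; rewrite in_cons => /predU1P[->|si].
- by apply: shrink Pe'; rewrite ee'0 ge_min lexx orbT.
- by apply: shrink (Pe i si); rewrite ee'0 ge_min lexx.
Qed.

Lemma lte0_le_fin (R : realType) (z : \bar R) :
  (z < 0)%E -> exists2 s : R, s < 0 & (z <= s%:E)%E.
Proof.
case: z => [s| |] // => [|_]; first by rewrite lte_fin => s0; exists s.
by exists (-1); rewrite ?leNye //; lra.
Qed.

Lemma ereal_sup_ge0 (R : realType) (T : set (\bar R)) :
  (forall eps : R, 0 < eps -> exists2 r, T r & ((- eps)%:E <= r)%E) ->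
  (0 <= ereal_sup T)%E.
Proof.
move=> approx.
have sup_ge eps : 0 < eps -> ((- eps)%:E <= ereal_sup T)%E.
  by move=> /approx [r Tr epsr]; apply: le_trans epsr (ereal_sup_ubound Tr).
case E : (ereal_sup T) => [s| |] //.
- rewrite lee_fin leNgt; apply/negP => s0.
  by have := sup_ge (- s / 2) (ltac:(lra)); rewrite E lee_fin; lra.
- by have := sup_ge 1 ltr01; rewrite E.
Qed.

Section ClarkeDerivative.
Variables (R : realType) (n : nat).
Notation vec := 'rV[R]_n.
Implicit Types (h : vec -> R) (x y u : vec).

Lemma clarke_ge0 h x u :
  (forall e eps : R, 0 < e -> 0 < eps -> exists y t,
     [/\ inBall x e y, 0 < t, t < e & - eps <= (h (y + t *: u) - h y) / t]) ->
  (0 <= clarke h x u)%E.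
Proof.
move=> quot; apply: le_ereal_inf_tmp => _ [e /= e0 <-].
apply: ereal_sup_ge0 => eps eps0; have [y [t [ye t0 te q]]] := quot e eps e0 eps0.
by exists ((h (y + t *: u) - h y) / t)%:E; [exists y, t | rewrite lee_fin].
Qed.

Lemma clarke_dir0_ge0 h x : (0 <= clarke h x 0)%E.
Proof.
apply: clarke_ge0 => e eps e0 eps0; exists x, (e / 2).
rewrite /inBall subrr enorm0 scaler0 addr0 subrr mul0r oppr_le0.
by split; rewrite ?ltW ?divr_gt0 //; lra.
Qed.

Lemma clarke_lt0_uniform h x u : (clarke h x u < 0)%E ->
  exists2 e, 0 < e & exists2 sg, sg < 0 & forall y t,
    inBall x e y -> 0 < t < e -> h (y + t *: u) - h y <= sg * t.
Proof.
move=> /ereal_inf_lt [_ [e /= e0 <-]] /lte0_le_fin [sg sg0 supsg].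
exists e => //; exists sg => // y t ye /andP[t0 te].
rewrite -ler_pdivrMr // -lee_fin; apply: le_trans supsg.
by apply: ereal_sup_ubound; exists y, t.
Qed.

Definition descent_dir h x u : Prop := exists2 e, 0 < e &
  forall y t, inBall x e y -> 0 < t < e -> h (y + t *: u) < h y.

Lemma clarke_lt0_descent_dir h x u : (clarke h x u < 0)%E -> descent_dir h x u.
Proof.
move=> /clarke_lt0_uniform [e e0 [sg sg0 decr]]; exists e => // y t ye /andP[t0 te].
have := decr y t ye (ltac:(by rewrite t0)).
have : sg * t < 0 by rewrite pmulr_llt0.
lra.
Qed.

Lemma descent_dir_conic h x (I : Type) (r : seq I) (a : I -> R) (u : I -> vec) :
  (forall i, 0 <= a i) -> (forall i, descent_dir h x (u i)) ->
  exists2 eta, 0 < eta & forall t, 0 < t < eta ->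
    h (x + t *: \sum_(i <- r) a i *: u i) <= h x.
Proof.
move=> a0 descent; elim: r => [|i r [eta eta0 IH]].
  by exists 1 => // t _; rewrite big_nil scaler0 addr0.
have [e e0 decr] := descent i.
pose S := \sum_(j <- r) a j *: u j.
have M0 : 0 < enorm S + a i + 1 by have := enorm_ge0 S; have := a0 i; lra.
exists (Num.min eta (e / (enorm S + a i + 1))); first by rewrite lt_min eta0 divr_gt0.
move=> t /andP[t0]; rewrite lt_min ltr_pdivlMr // => /andP[teta tM].
apply: le_trans (IH t (ltac:(by rewrite t0))).
rewrite big_cons scalerDr scalerA addrCA addrC.
have [<-|ai0] := eqVneq 0 (a i); first by rewrite mulr0 scale0r addr0.
have S0 := enorm_ge0 S; have ai_ge0 := a0 i.
apply/ltW/decr; last by rewrite pmulr_rgt0 // lt_def eq_sym ai0 ai_ge0 /=; nra.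
by rewrite /inBall addrAC subrr add0r enormZ gtr0_norm //; nra.
Qed.

Lemma cross_conic_decomposition (d v : vec) (ep : R) : (0 < n)%N -> 0 < ep ->
  (forall i, `|v ord0 i| <= ep / n%:R) ->
  exists2 a : 'I_n -> bool -> R, (forall i b, 0 <= a i b) &
    d + v = \sum_i \sum_(b : bool)
              a i b *: (d + (if b then ep else - ep) *: delta_mx ord0 i).
Proof.
move=> n0 ep0 vsmall; have n0' : (0 : R) < n%:R by rewrite ltr0n.
pose a i (b : bool) := (n%:R^-1 + (if b then v ord0 i else - v ord0 i) / ep) / 2.
have vbound i : - n%:R^-1 <= v ord0 i / ep <= n%:R^-1.
  have := vsmall i; rewrite ler_norml mulrC => /andP[vl vu].
  by rewrite ler_pdivlMr // ler_pdivrMr // mulNr vl vu.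
exists a.
  by move=> i b; have /andP[vl vu] := vbound i; apply: divr_ge0; case: b; lra.
have coef_d i : a i true + a i false = n%:R^-1.
  by rewrite /a; field; rewrite !gt_eqF.
have coef_e i : a i true * ep + a i false * - ep = v ord0 i.
  by rewrite /a; field; rewrite !gt_eqF.
clearbody a; under eq_bigr => i _ do
  rewrite big_bool /= !scalerDr !scalerA addrACA -!scalerDl coef_d coef_e.
rewrite big_split /= sumr_const card_ord -scaler_nat scalerA mulfV ?gt_eqF //.
by rewrite scale1r -row_sum_delta.
Qed.

End ClarkeDerivative.

Section RobustDescent.
Variables (R : realType) (n : nat).
Notation vec := 'rV[R]_n.
Implicit Types (c : vec -> \bar R) (xb d : vec).

Definition robust_descent c xb d : Prop :=
  exists2 r, 0 < r & exists2 beta, 0 < beta & forall y W s,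
    enorm (W - d) < beta -> 0 < s < r ->
    (forall tau, 0 <= tau <= s -> inBall xb r (y + tau *: W)) ->
    fine (c (y + s *: W)) <= fine (c y).

Lemma clarke_lt0_robust_descent c xb d :
  lipschitz_near c xb -> (clarkeE c xb d < 0)%E -> robust_descent c xb d.
Proof.
move=> [eL [eL0 [L [_ lipc]]]] /clarke_lt0_uniform [e e0 [sg sg0 decr]].
have L1 : 0 < `|L| + 1 by have := normr_ge0 L; lra.
have r0 : 0 < Num.min e (eL / 2) by rewrite lt_min e0 divr_gt0.
have beta0 : 0 < Num.min 1 (- sg / (`|L| + 1)) by rewrite lt_min ltr01 divr_gt0 ?oppr_gt0.
exists (Num.min e (eL / 2)) => //; exists (Num.min 1 (- sg / (`|L| + 1))) => //.
move=> y W s; rewrite !lt_min => /andP[Wd1 Wdsg] /andP[s0 /andP[se seL]] seg.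
have := seg 0; rewrite scale0r addr0 lexx ltW // => /(_ isT); rewrite /inBall lt_min.
move=> /andP[ye yeL].
have := seg s; rewrite lexx ltW // => /(_ isT); rewrite /inBall lt_min => /andP[_ yWeL].
have yd_eL : inBall xb eL (y + s *: d).
  have -> : y + s *: d = y + s *: W + s *: (d - W) by rewrite -addrA -scalerDr addrCA subrr addr0.
  rewrite (splitr eL); apply: inBall_addr => //.
  by rewrite enormZ gtr0_norm // enorm_distC; nra.
have := decr y s ye (ltac:(by rewrite s0)).
have yW_eL : inBall xb eL (y + s *: W) by apply: lt_trans yWeL _; lra.
have := lipc _ _ yW_eL yd_eL.
rewrite opprD addrACA subrr add0r -scalerBr enormZ (gtr0_norm s0).
have LWd : L * enorm (W - d) <= - sg.
  rewrite ltr_pdivlMr // in Wdsg.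
  by have := ler_norm L; have := enorm_ge0 (W - d); nra.
rewrite ler_norml => /andP[_ lip] decr_d.
have : L * (s * enorm (W - d)) <= - sg * s by rewrite mulrCA mulrC ler_wpM2r // ltW.
lra.
Qed.

Lemma nonneg_robust_descent c xb d :
  lipschitz_near c xb -> (forall y, 0 <= fine (c y)) ->
  (exists2 eh, 0 < eh & forall w, enorm (w - d) < eh ->
     exists2 e, 0 < e & forall y, inBall xb e y -> 0 < fine (c y) ->
       (clarkeE c y w < 0)%E) ->
  robust_descent c xb d.
Proof.
move=> [eL [eL0 [L [_ lipc]]]] c_ge0 [eh eh0 clarke_near].
have [n0|n_gt0] := posnP n.
  exists 1 => //; exists 1 => // y W s _ _ _.
  have -> : W = 0 by apply/rowP => -[i i_lt]; exfalso; move: i_lt; rewrite n0.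
  by rewrite scaler0 addr0.
pose ep := eh / 2; have ep0 : 0 < ep by rewrite divr_gt0.
pose u i (b : bool) := d + (if b then ep else - ep) *: (delta_mx ord0 i : vec).
have [ec ec0 descent] : exists2 ec, 0 < ec & forall (ib : 'I_n * bool) y,
    inBall xb ec y -> 0 < fine (c y) -> descent_dir (fine \o c) y (u ib.1 ib.2).
  apply: exists_common_radius => [[i b]|ib e e' /andP[e'0 e'e] desc y ye'].
    have [|e e0 clarke_neg] := clarke_near (u i b).
      rewrite /u addrAC subrr add0r enormZ enorm_delta_mx mulr1.
      by case: b; rewrite ?normrN gtr0_norm /ep //; lra.
    by exists e => // y ye cy0; apply: clarke_lt0_descent_dir; exact: clarke_neg.
  by apply: desc; exact: lt_le_trans ye' e'e.
have r0 : 0 < Num.min ec eL by rewrite lt_min ec0 eL0.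
have nR0 : (0 : R) < n%:R by rewrite ltr0n.
exists (Num.min ec eL) => //; exists (ep / n%:R); first by rewrite divr_gt0.
move=> y W s Wd /andP[s0 _] seg.
have [|a a0 Wdec] := @cross_conic_decomposition _ _ d (W - d) ep n_gt0 ep0.
  by move=> i; apply: le_trans (enorm_coord_le _ _) _; exact: ltW.
rewrite addrC subrK pair_bigA /= in Wdec.
have K0 : 0 < `|L| * enorm W + 1 by have := enorm_ge0 W; have := normr_ge0 L; nra.
(* [W] is a nonnegative combination of the [u i b], each a descent direction wherever [c > 0]. *)
have := @le_right_nonincr_where_pos _ (fun tau => fine (c (y + tau *: W))) s _ s0 K0.
have seg_eL t : 0 <= t <= s -> inBall xb eL (y + t *: W).
  by move=> /seg; rewrite /inBall lt_min => /andP[].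
rewrite scale0r addr0; apply => // [a' b' a'0s b'0s|tau /andP[tau0 taus] cpos].
  apply: le_trans (lipc _ _ (seg_eL _ a'0s) (seg_eL _ b'0s)) _.
  rewrite opprD addrACA subrr add0r -scalerBl enormZ.
  have := mulr_ge0 (normr_ge0 (a' - b')) (enorm_ge0 W); have := normr_ge0 (a' - b').
  have := ler_norm L; nra.
have : inBall xb ec (y + tau *: W).
  by have := seg tau (ltac:(by rewrite tau0 ltW)); rewrite /inBall lt_min => /andP[].
move=> /descent /(_ cpos) descent_tau.
have [eta eta0 conic] := @descent_dir_conic _ _ (fine \o c) (y + tau *: W) _
  (index_enum ('I_n * bool)%type) (fun ib => a ib.1 ib.2) (fun ib => u ib.1 ib.2)
  (fun ib => a0 ib.1 ib.2) descent_tau.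
by exists eta => // t t_eta; have := conic t t_eta; rewrite -Wdec /= scalerDl addrA.
Qed.

End RobustDescent.

Section MeritFunction.
Variables (R : realType) (n m : nat).
Notation vec := 'rV[R]_n.
Variables (f : vec -> \bar R) (g : 'I_m -> vec -> \bar R) (Gint : {set 'I_m}).
Implicit Types (y : vec) (r : R).

Lemma c_ext_ge0 y : (0 <= c_ext g Gint y)%E.
Proof. by apply: sume_ge0 => l _; apply: mule_ge0; rewrite le_max lexx. Qed.

Lemma c_ext_Omega_ext y : in_Omega_ext g Gint y -> c_ext g Gint y = 0%E.
Proof. by move=> yO; rewrite /c_ext big1 // => l l_ext; rewrite maxEge yO ?mule0. Qed.

Lemma merit_fin_c_int_lt0 y r : (merit g Gint f y r < +oo)%E -> (c_int g Gint y < 0)%E.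
Proof. by rewrite /merit; case: ifP. Qed.

Lemma merit_fin_change_rho y r r' : (forall x, f x != -oo%E) -> 0 < r -> 0 < r' ->
  (merit g Gint f y r < +oo)%E -> (merit g Gint f y r' < +oo)%E.
Proof.
move=> f_ninfty r0 r'0; rewrite /merit; case: ifP => // _.
move: (c_ext_ge0 y) (f_ninfty y).
case: (c_ext g Gint y) => [s| |] //; case: (f y) => [t| |] //= _ _.
- by move=> _; rewrite -EFinM -!EFinD ltry.
- by rewrite mulry gtr0_sg ?invr_gt0 // mul1e addey.
- by rewrite mulry gtr0_sg ?invr_gt0 // mul1e addey.
Qed.

Lemma merit_nlt_f_le y1 y2 r : 0 < r -> (c_int g Gint y1 < 0)%E ->
  c_int g Gint y1 \is a fin_num -> f y1 \is a fin_num -> c_ext g Gint y1 \is a fin_num ->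
  c_int g Gint y2 \is a fin_num -> f y2 \is a fin_num -> c_ext g Gint y2 \is a fin_num ->
  fine (c_int g Gint y2) <= fine (c_int g Gint y1) ->
  fine (c_ext g Gint y2) <= fine (c_ext g Gint y1) ->
  ~ (merit g Gint f y2 r < merit g Gint f y1 r)%E ->
  fine (f y1) <= fine (f y2).
Proof.
move=> r0; rewrite /merit.
case: (c_int g Gint y1) => [A1||] //; case: (f y1) => [F1||] //.
case: (c_ext g Gint y1) => [E1||] //; case: (c_int g Gint y2) => [A2||] //.
case: (f y2) => [F2||] //; case: (c_ext g Gint y2) => [E2||] //=.
rewrite !lte_fin => A1_lt0 _ _ _ _ _ _ A21 E21; rewrite A1_lt0 ifT; last lra.
rewrite -!EFinM -!EFinD lte_fin => /negP; rewrite -leNgt.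
have lnA : r * ln (- A1) <= r * ln (- A2) by rewrite ler_pM2l // ler_ln ?posrE; lra.
have : r^-1 * E2 <= r^-1 * E1 by rewrite ler_pM2l ?invr_gt0.
lra.
Qed.

Lemma hypertangent_open xb d : hypertangent g Gint xb d ->
  exists2 eh, 0 < eh & forall w, enorm (w - d) < eh -> hypertangent g Gint xb w.
Proof.
move=> [e [e0 hyp]]; exists (e / 2) => [|w wd]; first by rewrite divr_gt0.
exists (e / 2); split=> [|y w' t yO ye w'w t0 te]; first by rewrite divr_gt0.
apply: hyp; rewrite /inBall in ye w'w * => //; [lra | | lra].
rewrite -(subrKA w) addrC.
by apply: le_lt_trans (ler_enormD _ _) _; lra.
Qed.

Lemma c_int_robust_descent xb d : SCQ g Gint xb -> hypertangent g Gint xb d ->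
  robust_descent (c_int g Gint) xb d.
Proof.
by move=> [[ci_lip _] ci_clarke _] hd; exact: clarke_lt0_robust_descent ci_lip (ci_clarke d hd).
Qed.

Lemma c_ext_robust_descent xb d : SCQ g Gint xb -> hypertangent g Gint xb d ->
  robust_descent (c_ext g Gint) xb d.
Proof.
move=> [[_ ce_lip] _ ce_clarke] /hypertangent_open [eh eh0 hyp_near].
apply: nonneg_robust_descent => // [y|]; first exact/fine_ge0/c_ext_ge0.
exists eh => // w /hyp_near/ce_clarke [e [e0 ce_neg]]; exists e => // y ye ce_pos.
by apply: ce_neg => // /c_ext_Omega_ext ce0; move: ce_pos; rewrite ce0 ltxx.
Qed.

End MeritFunction.

Section NearEndPoint.
Variables (R : realType) (n m : nat).
Notation vec := 'rV[R]_n.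
Variables (f : vec -> \bar R) (g : 'I_m -> vec -> \bar R) (Gint : {set 'I_m}).
Variables (xb d : vec).
Hypotheses (f_lip : lipschitz_near f xb) (scq : SCQ g Gint xb).
Hypothesis d_hyp : hypertangent g Gint xb d.

(* Barrier and penalty do not increase along [y + [0, s] W], so the failed merit decrease forces
   [f y <= f (y + s W)]; Lipschitz continuity of [f] moves this from [W] to [d]. *)
Lemma unsuccessful_poll_quotient e eps : 0 < e -> 0 < eps ->
  exists2 r, 0 < r & exists2 beta, 0 < beta & forall y s W rh,
    enorm (y - xb) < r -> 0 < s < r -> s * enorm d < r ->
    enorm W = enorm d -> enorm (W - d) < beta -> 0 < rh -> (c_int g Gint y < 0)%E ->
    ~ (merit g Gint f (y + s *: W) rh < merit g Gint f y rh)%E ->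
    [/\ inBall xb e y, s < e & - eps <= (fine (f (y + s *: d)) - fine (f y)) / s].
Proof.
move=> e0 eps0.
have [ri ri0 [bi bi0 ci_desc]] := c_int_robust_descent scq d_hyp.
have [re re0 [be be0 ce_desc]] := c_ext_robust_descent scq d_hyp.
case: f_lip => [ef [ef0 [Lf [f_fin f_lipc]]]].
case: scq => [[[ei [ei0 [_ [ci_fin _]]]] [ee [ee0 [_ [ce_fin _]]]]] _ _].
pose mn := Num.min e (Num.min ri (Num.min re (Num.min ef (Num.min ei ee)))).
have mn0 : 0 < mn by rewrite !lt_min e0 ri0 re0 ef0 ei0 ee0.
have [mn_e [mn_ri [mn_re [mn_ef [mn_ei mn_ee]]]]] :
    mn <= e /\ mn <= ri /\ mn <= re /\ mn <= ef /\ mn <= ei /\ mn <= ee.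
  by rewrite /mn !ge_min !lexx ?orbT.
have in_mn rr p : mn <= rr -> inBall xb mn p -> inBall xb rr p.
  by move=> mn_rr pmn; exact: lt_le_trans pmn mn_rr.
have Lf1 : 0 < `|Lf| + 1 by have := normr_ge0 Lf; lra.
exists (mn / 2); first by rewrite divr_gt0.
exists (Num.min bi (Num.min be (eps / (`|Lf| + 1)))); first by rewrite !lt_min bi0 be0 divr_gt0.
move=> y s W rh y_mn /andP[s0 s_mn] sd_mn nW; rewrite !lt_min => /andP[Wd_bi /andP[Wd_be Wd_eps]].
move=> rh0 ci_lt0 merit_nlt.
have near_y v : enorm v <= s * enorm d -> inBall xb mn (y + v).
  by move=> vsd; rewrite (splitr mn); apply: inBall_addr => //; lra.
have y_mn' : inBall xb mn y by apply: lt_trans y_mn _; lra.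
have seg tau : 0 <= tau <= s -> inBall xb mn (y + tau *: W).
  move=> /andP[tau0 taus]; apply: near_y; rewrite enormZ ger0_norm // nW.
  by apply: ler_wpM2r => //; exact: enorm_ge0.
have yW_mn : inBall xb mn (y + s *: W) by apply: seg; rewrite lexx ltW.
have yd_mn : inBall xb mn (y + s *: d).
  by apply: near_y; rewrite enormZ gtr0_norm.
have s_lt rr : mn <= rr -> s < rr by move=> mn_rr; apply: lt_le_trans s_mn _; lra.
have ci_step : fine (c_int g Gint (y + s *: W)) <= fine (c_int g Gint y).
  by apply: ci_desc => // [|tau /seg]; [rewrite s0 s_lt | exact: in_mn].
have ce_step : fine (c_ext g Gint (y + s *: W)) <= fine (c_ext g Gint y).
  by apply: ce_desc => // [|tau /seg]; [rewrite s0 s_lt | exact: in_mn].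
have f_step : fine (f y) <= fine (f (y + s *: W)).
  by apply: (merit_nlt_f_le rh0 ci_lt0); rewrite ?ci_fin ?f_fin ?ce_fin //; exact: in_mn.
have := f_lipc _ _ (in_mn _ _ mn_ef yd_mn) (in_mn _ _ mn_ef yW_mn).
rewrite opprD addrACA subrr add0r -scalerBr enormZ (gtr0_norm s0) enorm_distC.
rewrite ler_norml => /andP[f_lip_lo _].
have : Lf * enorm (W - d) <= eps.
  rewrite ltr_pdivlMr // in Wd_eps.
  by have := ler_norm Lf; have := enorm_ge0 (W - d); nra.
move=> LWd; split; [exact: in_mn | exact: s_lt | rewrite ler_pdivlMr //].
by have := ler_wpM2l (ltW s0) LWd; lra.
Qed.

End NearEndPoint.

Lemma exists_mulr_expr_lt (R : realType) (th c eps : R) :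
  0 <= th < 1 -> 0 < eps -> exists j : nat, c * th ^+ j < eps.
Proof.
move=> /andP[th0 th1] eps0.
have c1 : 0 < `|c| + 1 by rewrite ltr_pwDr.
have := cvg_expr (ltac:(by rewrite ger0_norm) : `|th| < 1).
move/cvgr0Pnorm_lt => /(_ (eps / (`|c| + 1)) (divr_gt0 eps0 c1)) [N _ thN].
exists N; apply: le_lt_trans (ler_norm _) _; rewrite normrM.
have := thN N (leqnn N); rewrite /= ltr_pdivlMr // => thN_lt.
by have := normr_ge0 c; have := normr_ge0 (th ^+ N); nra.
Qed.

Lemma enorm_normalize (R : realType) (n : nat) (d : 'rV[R]_n) :
  d != 0 -> enorm ((enorm d)^-1 *: d) = 1.
Proof.
by move=> /enorm_gt0 d0; rewrite enormZ gtr0_norm ?invr_gt0 // mulrC divff // gt_eqF.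
Qed.

Lemma rescale_direction (R : realType) (n : nat) (u d : 'rV[R]_n) : u != 0 -> d != 0 ->
  [/\ 0 < enorm u / enorm d, u = (enorm u / enorm d) *: ((enorm d / enorm u) *: u),
      enorm u / enorm d * enorm d = enorm u,
      enorm ((enorm d / enorm u) *: u) = enorm d &
      enorm ((enorm d / enorm u) *: u - d)
        = enorm d * enorm ((enorm u)^-1 *: u - (enorm d)^-1 *: d)].
Proof.
move=> /enorm_gt0 u0 /enorm_gt0 d0; split.
- exact: divr_gt0.
- by rewrite scalerA mulrA divfK ?gt_eqF // mulfV ?gt_eqF // scale1r.
- by rewrite divfK ?gt_eqF.
- by rewrite enormZ gtr0_norm ?divr_gt0 // divfK ?gt_eqF.
suff -> : (enorm d / enorm u) *: u - d
          = enorm d *: ((enorm u)^-1 *: u - (enorm d)^-1 *: d) by rewrite enormZ gtr0_norm.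
by rewrite scalerBr !scalerA mulfV ?gt_eqF // scale1r.
Qed.

Section PathFollowing.
Variables (R : realType) (n m : nat).
Notation vec := 'rV[R]_n.
Variables (f : vec -> \bar R) (g : 'I_m -> vec -> \bar R) (Gint : {set 'I_m}).
Hypothesis f_ninfty : forall x, f x != -oo%E.
Variables (rho0 theta_rho Delta0 theta_Delta beta : R)
  (x : nat -> vec) (Delta rho : nat -> R) (S D : nat -> seq vec).
Hypothesis run :
  MADS_PIP_run g Gint f rho0 theta_rho Delta0 theta_Delta beta x Delta rho S D.

Lemma run_rho_gt0_merit_fin k :
  0 < rho k /\ (merit g Gint f (x k) (rho k) < +oo)%E.
Proof.
case: run => [[_ merit0] [rho0_gt0 [th0 _]] _ [_ [_ rho_0]] iter].
elim: k => [|k [rho_gt0 merit_fin]]; first by rewrite rho_0.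
have [_] := iter k; case: ifPn => [_|_].
  by move=> [[s _ [lt_merit ->]] _ ->]; split=> //; exact: lt_le_trans lt_merit (leey _).
move=> [_]; case: ifPn => [_|_].
  by move=> [[d _ [lt_merit ->]] _ ->]; split=> //; exact: lt_le_trans lt_merit (leey _).
move=> [-> _ ->]; case: ifP => // _.
have rho'_gt0 := mulr_gt0 th0 rho_gt0.
by split; last exact: merit_fin_change_rho f_ninfty rho_gt0 rho'_gt0 merit_fin.
Qed.

Lemma rho_nonincr : {homo rho : j k / (j <= k)%N >-> k <= j}.
Proof.
apply/nonincreasing_seqP => k; have [rho_gt0 _] := run_rho_gt0_merit_fin k.
case: run => _ [_ [_ th1]] _ _ /(_ k) [_].
case: ifPn => [_|_]; first by move=> [_ _ ->].
move=> [_]; case: ifPn => [_|_]; first by move=> [_ _ ->].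
by move=> [_ _ ->]; case: ifP => // _; rewrite ger_pMl // ltW.
Qed.

Lemma path_following_iter k : rho k.+1 < rho k ->
  [/\ forall d, d \in D k -> [/\ d != 0, enorm d <= Delta k &
        ~ (merit g Gint f (x k + d) (rho k) < merit g Gint f (x k) (rho k))%E],
      Delta k.+1 = theta_Delta * Delta k,
      Delta k.+1 <= rho k `^ beta &
      rho k.+1 = theta_rho * rho k].
Proof.
move=> rho_lt; case: run => _ _ _ _ /(_ k) [_].
case: ifPn => [_|_]; first by move=> [_ _ rho_eq]; move: rho_lt; rewrite rho_eq ltxx.
move=> [polled]; case: ifPn => [_|poll_fail].
  by move=> [_ _ rho_eq]; move: rho_lt; rewrite rho_eq ltxx.
move=> [_ Delta_eq]; case: ifP => [Delta_le|_]; last first.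
  by move=> rho_eq; move: rho_lt; rewrite rho_eq ltxx.
move=> rho_eq; split=> //; last by move: Delta_le; rewrite le_min lee_fin => /andP[].
move=> d dD; have [d0 _ dDelta] := polled d dD; split=> // merit_lt.
by move/asboolPn: poll_fail; apply; exists d.
Qed.

Variable Kx : set nat.
Hypotheses (Kx_rho : forall k, Kx k -> rho k.+1 < rho k) (Kx_inf : infinite_idx Kx).

Lemma rho_path_geom j : exists N, forall k, (N <= k)%N -> rho k <= rho0 * theta_rho ^+ j.
Proof.
case: run => _ [_ [th0 _]] _ [_ [_ rho_0]] _.
elim: j => [|j [N rhoN]].
  by exists 0%N => k _; rewrite expr0 mulr1 -rho_0 rho_nonincr.
have [k0 [Nk0 Kk0]] := Kx_inf N.
have [_ _ _ rho_k0] := path_following_iter (Kx_rho Kk0).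
exists k0.+1 => k k0k; apply: le_trans (rho_nonincr k0k) _.
by rewrite rho_k0 exprS mulrCA ler_pM2l //; exact: rhoN.
Qed.

Lemma rho_path_lt eps : 0 < eps -> exists N, forall k, (N <= k)%N -> rho k < eps.
Proof.
move=> eps0; have [th0 th1] : 0 < theta_rho /\ theta_rho < 1 by case: run => _ [_ []].
have [j rho_j] := @exists_mulr_expr_lt _ theta_rho rho0 eps (ltac:(by rewrite ltW)) eps0.
have [N rhoN] := rho_path_geom j.
by exists N => k Nk; apply: le_lt_trans (rhoN k Nk) rho_j.
Qed.

(* On the path-following iterations [Delta_(k+1) <= rho_k ^ beta], and [rho_k -> 0]. *)
Lemma Delta_path_lt eps : 0 < eps ->
  exists N, forall k, (N <= k)%N -> Kx k -> Delta k < eps.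
Proof.
move=> eps0.
have [thD0 thD1] : 0 < theta_Delta /\ theta_Delta < 1.
  by case: run => _ _ [_ [thD0 [thD1 _]]].
have beta1 : 1 < beta by case: run => _ _ _ [].
have [N rhoN] := @rho_path_lt (Num.min 1 (theta_Delta * eps)) (ltac:(by rewrite lt_min ltr01 mulr_gt0)).
exists N => k Nk Kk.
have [_ Delta_eq Delta_le _] := path_following_iter (Kx_rho Kk).
have [rho_gt0 _] := run_rho_gt0_merit_fin k.
move: (rhoN k Nk); rewrite lt_min => /andP[rho1 rho_eps].
have : rho k `^ beta <= rho k by rewrite ge1r_powR // ?rho_gt0 ltW.
by rewrite -(ltr_pM2l thD0) -Delta_eq; lra.
Qed.

Variable xbar : vec.
Hypotheses (Kx_lim : lim_along Kx x xbar) (D_dense : dense_in_sphere Kx D).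

Lemma end_path_unsuccessful_poll d r b : d != 0 -> 0 < r -> 0 < b ->
  exists k s W,
    [/\ enorm (x k - xbar) < r, 0 < s < r, s * enorm d < r, enorm W = enorm d &
        enorm (W - d) < b] /\
    [/\ 0 < rho k, (c_int g Gint (x k) < 0)%E &
        ~ (merit g Gint f (x k + s *: W) (rho k) < merit g Gint f (x k) (rho k))%E].
Proof.
move=> d0 r0 b0; have nd0 := enorm_gt0 d0.
have [N1 xN1] := Kx_lim r0.
have rdr0 : 0 < Num.min r (enorm d * r) by rewrite lt_min r0 mulr_gt0.
have [N2 DeltaN2] := Delta_path_lt rdr0.
have [Kd [KdKx [Kd_inf [dk [dkD dk_lim]]]]] := D_dense (enorm_normalize d0).
have [N3 dkN3] := dk_lim (b / enorm d) (divr_gt0 b0 nd0).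
have [k [Nk Kdk]] := Kd_inf (maxn N1 (maxn N2 N3)).
move: Nk; rewrite !geq_max => /and3P[N1k N2k N3k]; have Kxk := KdKx k Kdk.
have [poll _ _ _] := path_following_iter (Kx_rho Kxk).
have [dk0 dk_Delta dk_fail] := poll _ (dkD k Kdk).
have [s0 dk_sW sd nW Wd] := rescale_direction dk0 d0.
have [rho_gt0 merit_fin] := run_rho_gt0_merit_fin k.
have := DeltaN2 k N2k Kxk; rewrite lt_min => /andP[Delta_r Delta_dr].
exists k, (enorm (dk k) / enorm d), ((enorm d / enorm (dk k)) *: dk k).
split; split=> //; first exact: xN1.
- by rewrite s0 ltr_pdivrMr // mulrC; apply: le_lt_trans dk_Delta Delta_dr.
- by rewrite sd; apply: le_lt_trans dk_Delta Delta_r.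
- by rewrite Wd -ltr_pdivlMl // mulrC; exact: dkN3.
- exact: merit_fin_c_int_lt0 merit_fin.
- by rewrite -dk_sW.
Qed.

End PathFollowing.

Unset Implicit Arguments.

Theorem mainTheorem8 (R : realType) (n m : nat)
  (f : 'rV[R]_n -> \bar R) (g : 'I_m -> 'rV[R]_n -> \bar R) (Gint : {set 'I_m})
  (hf : forall x, f x != -oo%E) (hg : forall l x, g l x != -oo%E)
  (A1 : forall alpha : R, exists M : R,
          forall x, (f x <= alpha%:E)%E -> enorm x <= M)
  (rho0 theta_rho Delta0 theta_Delta beta : R)
  (x : nat -> 'rV[R]_n) (Delta rho : nat -> R) (S D : nat -> seq 'rV[R]_n)
  (hrun : MADS_PIP_run g Gint f rho0 theta_rho Delta0 theta_Delta beta
            x Delta rho S D)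
  (Kx : set nat) (xbar : 'rV[R]_n)
  (hKsub : forall k, Kx k -> rho k.+1 < rho k)
  (hKinf : infinite_idx Kx)
  (hKlim : lim_along Kx x xbar)
  (hflip : lipschitz_near f xbar)
  (hdense : dense_in_sphere Kx D)
  (hOmega : in_Omega g Gint xbar)
  (hSCQ : SCQ g Gint xbar) :
  forall d : 'rV[R]_n, hypertangent g Gint xbar d ->
    (0 <= clarkeE f xbar d)%E.
Proof.
move=> d d_hyp; have [->|d0] := eqVneq d 0; first exact: clarke_dir0_ge0.
apply: clarke_ge0 => e eps e0 eps0.
have [r r0 [b b0 poll_quotient]] := unsuccessful_poll_quotient hflip hSCQ d_hyp e0 eps0.
have [k [s [W [[xk_r s0r sd_r nW Wd_b] [rho_gt0 ci_lt0 merit_nlt]]]]] :=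
  end_path_unsuccessful_poll hf hrun hKsub hKinf hKlim hdense d0 r0 b0.
have [xk_e se quotient] := poll_quotient _ _ _ _ xk_r s0r sd_r nW Wd_b rho_gt0 ci_lt0 merit_nlt.
by exists (x k), s; split=> //; move: s0r => /andP[].
Qed.
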